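(* Let $c>1$. If a number $x_1\in(0,1)$ satisfies $x_1\operatorname{arctanh} x_1<\frac{1+c}{2c}$, then $\Phi(c)<H(x_1,c)$.
   Context: $\operatorname{arctanh} r=\frac12\log\frac{1+r}{1-r}$. For $c\ge0$, $\Phi(c)=\sup_{0<r<1}\{r+c(1-r^2)\operatorname{arctanh} r\}$. For $x>0$ and $c$ real, $H(x,c)=\frac{1-c}{2}x+\frac{1+c}{2}x^{-1}$. *)

From Stdlib Require Import Reals.
Open Scope R_scope.

Definition arctanh (r : R) : R := / 2 * ln ((1 + r) / (1 - r)).

Definition Phi_set (c : R) (y : R) : Prop :=
  exists r, 0 < r < 1 /\ y = r + c * (1 - r ^ 2) * arctanh r.

Definition is_Phi (c p : R) : Prop := is_lub (Phi_set c) p.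

Definition H (x c : R) : R := (1 - c) / 2 * x + (1 + c) / 2 * / x.

(* The function f(r) = r + c (1 - r^2) arctanh r has derivative
   f'(r) = 1 + c - 2 c r arctanh r, which is nonincreasing on (0,1) because
   r arctanh r is increasing there; so f is concave and lies below its tangent
   at x1.  The hypothesis says exactly that the tangent slope f'(x1) is
   positive, hence Phi(c) <= f(x1) + f'(x1) (1 - x1), and this bound falls
   short of H(x1,c) by f'(x1) (1 - x1)^2 / (2 x1) > 0. *)
From Stdlib Require Import Reals Lra.
From Coquelicot Require Import Coquelicot.
Open Scope R_scope.

Lemma arctanh_0 : arctanh 0 = 0.
Proof.
  unfold arctanh. replace ((1 + 0) / (1 - 0)) with 1 by field.
  rewrite ln_1. ring.
Qed.

Lemma arctanh_le t s : -1 < t -> t <= s -> s < 1 -> arctanh t <= arctanh s.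
Proof.
  intros Ht Hts Hs. unfold arctanh.
  apply Rmult_le_compat_l; [lra|].
  apply ln_le.
  - apply Rdiv_lt_0_compat; lra.
  - unfold Rdiv. apply (Rmult_le_reg_r ((1 - t) * (1 - s))); [nra|].
    replace ((1 + t) * / (1 - t) * ((1 - t) * (1 - s))) with ((1 + t) * (1 - s))
      by (field; lra).
    replace ((1 + s) * / (1 - s) * ((1 - t) * (1 - s))) with ((1 + s) * (1 - t))
      by (field; lra).
    nra.
Qed.

Lemma arctanh_ge0 t : 0 <= t -> t < 1 -> 0 <= arctanh t.
Proof. intros. rewrite <- arctanh_0. apply arctanh_le; lra. Qed.

Lemma mult_arctanh_le t s :
  0 <= t -> t <= s -> s < 1 -> t * arctanh t <= s * arctanh s.
Proof.
  intros Ht Hts Hs.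
  pose proof (arctanh_ge0 t Ht ltac:(lra)).
  pose proof (arctanh_le t s ltac:(lra) Hts Hs).
  apply Rmult_le_compat; lra.
Qed.

Lemma le_tangent_of_derive_antitone (f f' : R -> R) (a b t r : R) :
  (forall x, a < x < b -> derivable_pt_lim f x (f' x)) ->
  (forall x y, a < x -> x <= y -> y < b -> f' y <= f' x) ->
  a < t < b -> a < r < b ->
  f r - f t <= f' t * (r - t).
Proof.
  intros Hf Hanti Ht Hr.
  destruct (Rtotal_order t r) as [Htr | [-> | Hrt]].
  - destruct (MVT_cor2 f f' t r Htr) as [s [Es Hs]].
    { intros x Hx. apply Hf. lra. }
    rewrite Es. apply Rmult_le_compat_r; [lra|].
    apply Hanti; lra.
  - lra.
  - destruct (MVT_cor2 f f' r t Hrt) as [s [Es Hs]].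
    { intros x Hx. apply Hf. lra. }
    assert (f' t <= f' s) by (apply Hanti; lra).
    assert (f' t * (t - r) <= f' s * (t - r)) by (apply Rmult_le_compat_r; lra).
    lra.
Qed.

Definition Phi_fun (c r : R) : R := r + c * (1 - r ^ 2) * arctanh r.

Definition Phi_fun_deriv (c r : R) : R := 1 + c - 2 * c * r * arctanh r.

Lemma derivable_pt_lim_Phi_fun c r :
  -1 < r < 1 -> derivable_pt_lim (Phi_fun c) r (Phi_fun_deriv c r).
Proof.
  intros Hr. apply is_derive_Reals.
  unfold Phi_fun, Phi_fun_deriv, arctanh. auto_derive.
  - repeat split; try lra. apply Rdiv_lt_0_compat; lra.
  - set (L := ln _). field. lra.
Qed.

Lemma Phi_fun_deriv_antitone c t s :
  0 <= c -> 0 <= t -> t <= s -> s < 1 -> Phi_fun_deriv c s <= Phi_fun_deriv c t.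
Proof.
  intros Hc Ht Hts Hs. unfold Phi_fun_deriv.
  pose proof (mult_arctanh_le t s Ht Hts Hs).
  assert (2 * c * (t * arctanh t) <= 2 * c * (s * arctanh s))
    by (apply Rmult_le_compat_l; lra).
  lra.
Qed.

Lemma Phi_fun_le_tangent c t r :
  0 <= c -> 0 < t < 1 -> 0 < r < 1 ->
  Phi_fun c r <= Phi_fun c t + Phi_fun_deriv c t * (r - t).
Proof.
  intros Hc Ht Hr.
  enough (Phi_fun c r - Phi_fun c t <= Phi_fun_deriv c t * (r - t)) by lra.
  apply (le_tangent_of_derive_antitone _ _ 0 1); auto.
  - intros x Hx. apply derivable_pt_lim_Phi_fun. lra.
  - intros x y Hx Hxy Hy. apply Phi_fun_deriv_antitone; lra.
Qed.

Lemma Phi_set_upper_bound c x :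
  0 <= c -> 0 < x < 1 -> 0 <= Phi_fun_deriv c x ->
  is_upper_bound (Phi_set c) (Phi_fun c x + Phi_fun_deriv c x * (1 - x)).
Proof.
  intros Hc Hx HD y [r [Hr ->]].
  pose proof (Phi_fun_le_tangent c x r Hc Hx Hr).
  assert (Phi_fun_deriv c x * (r - x) <= Phi_fun_deriv c x * (1 - x))
    by (apply Rmult_le_compat_l; lra).
  unfold Phi_fun in *. lra.
Qed.

Lemma H_sub_tangent_bound c x :
  x <> 0 ->
  H x c - (Phi_fun c x + Phi_fun_deriv c x * (1 - x))
  = Phi_fun_deriv c x * (1 - x) ^ 2 / (2 * x).
Proof. intros Hx. unfold H, Phi_fun, Phi_fun_deriv. field. exact Hx. Qed.

Theorem lemma2p5 (c x1 : R) :
  1 < c -> 0 < x1 < 1 ->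
  x1 * arctanh x1 < (1 + c) / (2 * c) ->
  exists p, is_Phi c p /\ p < H x1 c.
Proof.
  intros Hc Hx Hsmall.
  set (B := Phi_fun c x1 + Phi_fun_deriv c x1 * (1 - x1)).
  assert (HD : 0 < Phi_fun_deriv c x1).
  { unfold Phi_fun_deriv.
    apply (Rmult_lt_compat_l (2 * c)) in Hsmall; [|lra].
    replace (2 * c * ((1 + c) / (2 * c))) with (1 + c) in Hsmall by (field; lra).
    lra. }
  assert (Hub : is_upper_bound (Phi_set c) B)
    by (apply Phi_set_upper_bound; lra).
  destruct (completeness (Phi_set c)) as [p Hp].
  - exists B. exact Hub.
  - exists (Phi_fun c (/ 2)). exists (/ 2). split; [lra | reflexivity].
  - exists p. split; [exact Hp|].
    assert (p <= B) by (apply Hp; exact Hub).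
    assert (Hgap : 0 < Phi_fun_deriv c x1 * (1 - x1) ^ 2 / (2 * x1)).
    { apply Rdiv_lt_0_compat; [|lra]. apply Rmult_lt_0_compat; [lra|].
      apply pow_lt. lra. }
    rewrite <- (H_sub_tangent_bound c x1) in Hgap by lra.
    fold B in Hgap. lra.
Qed.
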